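(* Let $\Pi$ be an $\mathit{LP}^{\mathit{MLN}}$ program and let $\mathrm{trans}_2(\Pi)$ be the $\mathit{LP}^{\mathit{MLN}\pm}$ program whose hard formulas are $\{\alpha : F \vee \neg F \mid w : F \in \Pi\}$, whose soft integrity constraints are $\{w : \neg\neg F \mid w : F \in \Pi,\ w \neq \alpha\}$, and whose weak constraints are $\{:\sim F\,[-1,1] \mid w : F \in \Pi,\ w = \alpha\}$. Then for every interpretation $X$, $P_\Pi(X) = P^{\pm}_{\mathrm{trans}_2(\Pi)}(X)$.
   Context: Fix a finite set of propositional atoms; an interpretation is a set $X$ of atoms. For a set $\Gamma$ of propositional formulas, the reduct $\Gamma^X$ is obtained by replacing every maximal subformula of each formula of $\Gamma$ not satisfied by $X$ by $\bot$; $X$ is a stable model of $\Gamma$ if $X$ is a minimal model of $\Gamma^X$ (Ferraris' semantics). $\mathrm{SM}(\Gamma)$ is the set of stable models of $\Gamma$. A weak constraint has the form $:\sim F\,[w,l]$ with $F$ a formula, $w$ a real number and $l$ a nonnegative integer (the level). For a set $\Gamma_1$ of formulas and a set $\Gamma_2$ of weak constraints, the cost of $X$ at level $l$ is $\mathrm{cost}_l(X)=\sum\{w \mid :\sim F[w,l]\in\Gamma_2,\ X\models F\}$; the optimal stable models of $\Gamma_1\cup\Gamma_2$ are those $X\in\mathrm{SM}(\Gamma_1)$ for which there is no $Y\in\mathrm{SM}(\Gamma_1)$ and level $l$ with $\mathrm{cost}_l(Y)<\mathrm{cost}_l(X)$ and $\mathrm{cost}_{l'}(Y)=\mathrm{cost}_{l'}(X)$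 for all $l'>l$. An $\mathit{LP}^{\mathit{MLN}}$ program $\Pi$ is a finite set of weighted formulas $w:F$, $F$ a propositional formula, $w$ a real number (soft) or $\alpha$ (hard, infinite weight). For a set $\Sigma$ of weighted formulas, $\overline{\Sigma}$ drops the weights, $\Sigma_X=\{w:F\in\Sigma \mid X\models F\}$, and $\mathrm{TW}(\Sigma)=\exp(\sum_{w:F\in\Sigma} w)$ (with $\alpha$ treated as a real parameter). $\mathrm{SSM}(\Pi)=\{X \mid X$ is a stable model of $\overline{\Pi_X}\}$; $W_\Pi(X)=\mathrm{TW}(\Pi_X)$ if $X\in\mathrm{SSM}(\Pi)$ and $0$ otherwise; and $P_\Pi(X)=\lim_{\alpha\to\infty} W_\Pi(X)/\sum_{Y\in\mathrm{SSM}(\Pi)}W_\Pi(Y)$. An $\mathit{LP}^{\mathit{MLN}\pm}$ program $\Pi'$ is a set consisting of hard formulas $\alpha:F$ (set $\mathrm{hard}(\Pi')$), soft integrity constraints $w:\neg F$ with $w$ real (set $\mathrm{soft}(\Pi')$), and weak constraints (set $\mathrm{weak}(\Pi')$). $\mathrm{OSM}(\Pi')$ is the set of optimal stable models of $\overline{\mathrm{hard}(\Pi')}\cup\mathrm{weak}(\Pi')$. $W^{\pm}_{\Pi'}(X)=\mathrm{TW}(\mathrm{soft}(\Pi')_X)$ if $X\in\mathrm{OSM}(\Pi')$ and $0$ otherwise, and $P^{\pm}_{\Pi'}(X)=W^{\pm}_{\Pi'}(X)/\sum_{Y\in\mathrm{OSM}(\Pi')}W^{\pm}_{\Pi'}(Y)$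 (undefined if $\mathrm{OSM}(\Pi')$ is empty). *)

From HB Require Import structures.
From mathcomp Require Import all_boot all_order all_algebra.
From mathcomp Require Import boolp classical_sets reals topology normedtype sequences.
Set Implicit Arguments. Unset Strict Implicit. Unset Printing Implicit Defensive.
Import Order.TTheory GRing.Theory Num.Theory.
Local Open Scope ring_scope.

Inductive form (A : Type) : Type :=
| Atom of A
| Bot
| And of form A & form A
| Or of form A & form A
| Imp of form A & form A.
Arguments Bot {A}.

Definition Neg (A : Type) (F : form A) : form A := Imp F Bot.

Section Semantics.
Variable A : finType.

Fixpoint sat (X : {set A}) (F : form A) : bool :=
  match F with
  | Atom a => a \in X
  | Bot => false
  | And G H => sat X G && sat X H
  | Or G H => sat X G || sat X H
  | Imp G H => sat X G ==> sat X H
  end.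

Definition models (X : {set A}) (G : seq (form A)) : bool := all (sat X) G.

Fixpoint reduct (X : {set A}) (F : form A) : form A :=
  if ~~ sat X F then Bot else
  match F with
  | Atom a => Atom a
  | Bot => Bot
  | And G H => And (reduct X G) (reduct X H)
  | Or G H => Or (reduct X G) (reduct X H)
  | Imp G H => Imp (reduct X G) (reduct X H)
  end.

Definition reductS (X : {set A}) (G : seq (form A)) : seq (form A) :=
  [seq reduct X F | F <- G].

Definition stable (G : seq (form A)) (X : {set A}) : bool :=
  models X (reductS X G) &&
  [forall Y : {set A}, (Y \proper X) ==> ~~ models Y (reductS X G)].

End Semantics.

Section Programs.
Variable R : realType.
Variable A : finType.

(** Weights of LP^MLN rules: a real number (soft) or alpha (hard). *)
Inductive weight : Type := Soft of R | Hard.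

Definition wval (alpha : R) (w : weight) : R :=
  match w with Soft r => r | Hard => alpha end.

Definition lpmln := seq (weight * form A).

Definition satPart (Pi : lpmln) (X : {set A}) : lpmln :=
  [seq p <- Pi | sat X p.2].

Definition TW (alpha : R) (S : lpmln) : R :=
  expR (\sum_(p <- S) wval alpha p.1).

Definition SSM (Pi : lpmln) (X : {set A}) : bool :=
  stable [seq p.2 | p <- satPart Pi X] X.

Definition W_lpmln (alpha : R) (Pi : lpmln) (X : {set A}) : R :=
  if SSM Pi X then TW alpha (satPart Pi X) else 0.

(** The normalized weight W_Pi(X) / sum_{Y in SSM(Pi)} W_Pi(Y) as a function
    of alpha; P_Pi(X) is its limit as alpha -> +oo. *)
Definition ratio_lpmln (Pi : lpmln) (X : {set A}) (alpha : R) : R :=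
  W_lpmln alpha Pi X / \sum_(Y : {set A}) W_lpmln alpha Pi Y.

(** LP^MLN+- programs: hard formulas, soft integrity constraints (w : F),
    weak constraints  :~ F [w, l]. *)
Record lpmlnpm := LPMLNpm {
  hardF : seq (form A);
  softF : seq (R * form A);
  weakF : seq (form A * R * nat)
}.

Definition cost (P : lpmlnpm) (l : nat) (X : {set A}) : R :=
  \sum_(c <- weakF P | (c.2 == l) && sat X c.1.1) c.1.2.

Definition OSM (P : lpmlnpm) (X : {set A}) : Prop :=
  stable (hardF P) X /\
  ~ (exists (Y : {set A}) (l : nat),
        stable (hardF P) Y /\ cost P l Y < cost P l X /\
        forall l' : nat, (l < l')%N -> cost P l' Y = cost P l' X).

Definition W_pm (P : lpmlnpm) (X : {set A}) : R :=
  if `[< OSM P X >] then expR (\sum_(p <- softF P | sat X p.2) p.1) else 0.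

Definition P_pm (P : lpmlnpm) (X : {set A}) : R :=
  W_pm P X / \sum_(Y : {set A}) W_pm P Y.

Definition trans2 (Pi : lpmln) : lpmlnpm :=
  {| hardF := [seq Or p.2 (Neg p.2) | p <- Pi];
     softF := flatten [seq (match p.1 with
                            | Soft w => [:: (w, Neg (Neg p.2))]
                            | Hard => [::] end) | p <- Pi];
     weakF := flatten [seq (match p.1 with
                            | Soft _ => [::]
                            | Hard => [:: (p.2, -1, 1%N)] end) | p <- Pi] |}.

End Programs.

(** The LP^MLN weight of a soft stable model [X] is [exp (s X + alpha * h X)],
    with [s X] the total weight of the soft rules and [h X] the number of hard
    rules satisfied by [X].  Dividing by [exp (alpha * m)], [m] the maximum of
    [h] over soft stable models, shows that as [alpha -> +oo] the normalized
    weights concentrate on the soft stable models maximizing [h], each keeping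
    the relative weight [exp (s X)].

    On the LP^MLN+- side, [F \/ ~F] is satisfied by every interpretation and
    its reduct w.r.t. [X] is [F^X \/ bot] when [X |= F] and the tautology
    [bot \/ (bot -> bot)] otherwise, so the stable models of the hard part of
    trans_2(Pi) are exactly the soft stable models of Pi.  The weak
    constraints [:~ F [-1, 1]] give cost [- h X] at level 1, so the optimal
    ones are those maximizing [h], and the soft constraints [w : ~~F] are
    satisfied exactly when [F] is, giving weight [exp (s X)]. *)
From Pilot Require Import Defs.
From HB Require Import structures.
From mathcomp Require Import all_boot all_order all_algebra.
From mathcomp Require Import boolp classical_sets reals topology normedtype sequences.
From mathcomp Require Import exp realfun.
From mathcomp Require Import ring.
Import numFieldNormedType.Exports.
Set Implicit Arguments. Unset Strict Implicit. Unset Printing Implicit Defensive.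
Import Order.TTheory GRing.Theory Num.Theory.
Local Open Scope ring_scope.
Local Open Scope classical_set_scope.

Lemma cvg_expRN_exprn (R : realType) (d : nat) : (0 < d)%N ->
  expR (- a) ^+ d @[a --> +oo] --> (0 : R).
Proof.
move=> d_gt0; have -> : (0 : R) = 0 ^+ d by rewrite expr0n gtn_eqF.
apply: (@cvg_comp _ _ _ (fun a => expR (- a)) (fun x => x ^+ d) _ (nbhs (0 : R))).
  exact: cvgr_expR.
exact: exprn_continuous.
Qed.

Section ExponentialTilting.
Variables (R : realType) (I : finType) (S : pred I) (c : I -> R) (h : I -> nat).

Definition tilted_weight (a : R) (Y : I) : R :=
  if S Y then expR (c Y + a * (h Y)%:R) else 0.

Definition limit_weight (Y : I) : R :=
  if S Y && (h Y == \max_(Z | S Z) h Z) then expR (c Y) else 0.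

Lemma cvg_tilted_weight_rescaled (Y : I) :
  tilted_weight a Y * expR (- (a * (\max_(Z | S Z) h Z)%:R)) @[a --> +oo]
    --> limit_weight Y.
Proof.
rewrite /tilted_weight /limit_weight; set m := \max_(Z | S Z) h Z.
case SY: (S Y) => /=; last by under eq_fun do rewrite mul0r; exact: cvg_cst.
have hY_le : (h Y <= m)%N by exact: leq_bigmax_cond.
under eq_fun do rewrite -expRD.
case: eqP => [->|/eqP hY_neq].
  by under eq_fun do rewrite -addrA subrr addr0; exact: cvg_cst.
have hY_lt : (0 < m - h Y)%N by rewrite subn_gt0 ltn_neqAle hY_neq.
have -> : (0 : R) = expR (c Y) * 0 by rewrite mulr0.
have decay a : c Y + a * (h Y)%:R - a * m%:R = c Y + (m - h Y)%:R * - a.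
  by rewrite natrB //; ring.
under eq_fun do rewrite decay expRD expRM_natl.
by apply: cvgMl_tmp; exact: cvg_expRN_exprn.
Qed.

Lemma cvg_tilted_ratio (X : I) :
  tilted_weight a X / \sum_Y tilted_weight a Y @[a --> +oo]
    --> limit_weight X / \sum_Y limit_weight Y.
Proof.
set m := \max_(Z | S Z) h Z.
case SX: (S X); last first.
  rewrite /limit_weight /tilted_weight SX mul0r.
  by under eq_fun do rewrite mul0r; exact: cvg_cst.
pose e (a : R) := expR (- (a * m%:R)).
have rescale a :
    tilted_weight a X / \sum_Y tilted_weight a Y =
    tilted_weight a X * e a / \sum_Y tilted_weight a Y * e a.
  by rewrite -big_distrl /= -mulf_div divff ?mulr1 // gt_eqF ?expR_gt0.
under eq_fun do rewrite rescale.
have [Y0 SY0 hY0] : {Y0 | S Y0 & m = h Y0}.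
  by apply: eq_bigmax_cond; apply/card_gt0P; exists X.
have limit_sum_gt0 : 0 < \sum_Y limit_weight Y.
  rewrite (bigD1 Y0) //= ltr_pwDl //.
    by rewrite /limit_weight SY0 -hY0 eqxx expR_gt0.
  by apply: sumr_ge0 => Y _; rewrite /limit_weight; case: ifP => // _; exact: expR_ge0.
apply: cvgM; first exact: cvg_tilted_weight_rescaled.
apply: cvgV; first by rewrite gt_eqF.
apply: cvg_big => //; first exact: add_continuous.
by move=> Y _; exact: cvg_tilted_weight_rescaled.
Qed.

End ExponentialTilting.

Section Translation.
Variables (R : realType) (A : finType) (Pi : lpmln R A).

Definition soft_sum (X : {set A}) : R :=
  \sum_(p <- Pi | sat X p.2) (if p.1 is Soft r then r else 0).

Definition hard_count (X : {set A}) : nat :=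
  (\sum_(p <- Pi | sat X p.2) (if p.1 is Hard then 1 else 0))%N.

Lemma TW_satPart (alpha : R) (X : {set A}) :
  TW alpha (satPart Pi X) = expR (soft_sum X + alpha * (hard_count X)%:R).
Proof.
rewrite /TW /satPart big_filter /soft_sum /hard_count; congr expR.
elim: Pi => [|[w F] Pi' IH]; first by rewrite !big_nil mulr0 addr0.
rewrite !big_cons /=; case: (sat X F) => //; rewrite IH.
by case: w => [r|] /=; rewrite ?natrD; ring.
Qed.

Lemma W_lpmlnE (alpha : R) (X : {set A}) :
  W_lpmln alpha Pi X = tilted_weight (SSM Pi) soft_sum hard_count alpha X.
Proof. by rewrite /W_lpmln /tilted_weight TW_satPart. Qed.

Lemma reduct_Bot (X : {set A}) (F : Defs.form A) : ~~ sat X F -> reduct X F = Bot.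
Proof. by case: F => [a||G H|G H|G H] /= unsat_F //; rewrite unsat_F. Qed.

Lemma models_reduct_trans2 (X Y : {set A}) :
  models Y (reductS X (hardF (trans2 Pi))) =
  models Y (reductS X [seq p.2 | p <- satPart Pi X]).
Proof.
rewrite /models /reductS /satPart /=.
elim: Pi => [|[w F] Pi' IH] //=.
case sat_F: (sat X F) => /=; first by rewrite orbF IH.
by rewrite (reduct_Bot (negbT sat_F)) IH.
Qed.

Lemma stable_trans2 (X : {set A}) : stable (hardF (trans2 Pi)) X = SSM Pi X.
Proof.
rewrite /SSM /stable models_reduct_trans2; congr andb.
by apply: eq_forallb => Y; rewrite models_reduct_trans2.
Qed.

Lemma soft_sum_trans2 (X : {set A}) :
  \sum_(p <- softF (trans2 Pi) | sat X p.2) p.1 = soft_sum X.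
Proof.
rewrite /soft_sum /=.
elim: Pi => [|[w F] Pi' IH]; first by rewrite !big_nil.
rewrite /= big_cat big_cons.
case: w => [r|] /=; rewrite IH ?big_cons big_nil /=;
  by case: (sat X F); rewrite /= ?addr0 ?add0r.
Qed.

Lemma cost_trans2 (l : nat) (X : {set A}) :
  cost (trans2 Pi) l X = if l == 1%N then - (hard_count X)%:R else 0.
Proof.
rewrite /cost /hard_count /=.
elim: Pi => [|[w F] Pi' IH]; first by rewrite !big_nil; case: ifP; rewrite ?oppr0.
rewrite /= big_cat big_cons.
case: w => [r|] /=; rewrite IH ?big_cons big_nil /= ?(eq_sym 1%N l);
  case: (sat X F); case: (l == 1%N); rewrite /= ?add0r ?addr0 ?natrD //; ring.
Qed.

Lemma OSM_trans2 (X : {set A}) :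
  OSM (trans2 Pi) X <->
  SSM Pi X && (hard_count X == \max_(Y | SSM Pi Y) hard_count Y).
Proof.
set m := \max_(Y | SSM Pi Y) hard_count Y.
have le_m Y : SSM Pi Y -> (hard_count Y <= m)%N by move=> ?; exact: leq_bigmax_cond.
rewrite /OSM stable_trans2; split.
  move=> [SX not_improvable]; rewrite SX eqn_leq le_m //=.
  apply/bigmax_leqP => Y SY; rewrite leqNgt; apply/negP => lt_XY.
  apply: not_improvable; exists Y, 1%N; rewrite stable_trans2 !cost_trans2 /=.
  split=> //; split; first by rewrite ltrN2 ltr_nat.
  by move=> l' lt1l'; rewrite !cost_trans2 (gtn_eqF lt1l').
move=> /andP[SX /eqP hX]; split=> // -[Y [l [SY [lt_cost _]]]].
move: lt_cost; rewrite !cost_trans2 stable_trans2 in SY *.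
case: (l == 1%N); last by rewrite ltxx.
by rewrite ltrN2 ltr_nat hX ltnNge le_m.
Qed.

Lemma W_pm_trans2 (X : {set A}) :
  W_pm (trans2 Pi) X = limit_weight (SSM Pi) soft_sum hard_count X.
Proof. by rewrite /W_pm soft_sum_trans2 (propext (OSM_trans2 X)) asboolb. Qed.

End Translation.

Theorem proposition2 (R : realType) (A : finType) (Pi : lpmln R A) (X : {set A}) :
  ratio_lpmln Pi X @ +oo --> P_pm (trans2 Pi) X.
Proof.
have -> : ratio_lpmln Pi X = fun a =>
    tilted_weight (SSM Pi) (soft_sum Pi) (hard_count Pi) a X /
    \sum_Y tilted_weight (SSM Pi) (soft_sum Pi) (hard_count Pi) a Y.
  by apply: funext => a; rewrite /ratio_lpmln W_lpmlnE; under eq_bigr do rewrite W_lpmlnE.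
rewrite /P_pm W_pm_trans2; under eq_bigr do rewrite W_pm_trans2.
exact: cvg_tilted_ratio.
Qed.
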